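(* Let $\mathbb{K}$ be a field of characteristic not $2$, $E$ an $n$-dimensional $\mathbb{K}$-vector space and $\mathcal{V}$ a linear subspace of $\mathcal{L}(E)$. Suppose either (a) $n\geq 3$ and every $u\in\mathcal{V}$ has at most two distinct eigenvalues in $\mathbb{K}$, or (b) $n\geq 2$ and every $u\in\mathcal{V}$ has at most one nonzero eigenvalue in $\mathbb{K}$. Then there exists a $\mathcal{V}$-good vector in $E$.
   Context: A nonzero vector $x\in E$ is $\mathcal{V}$-good if there is no $u\in\mathcal{V}$ with $\operatorname{im}u=\mathbb{K}x$ and $\operatorname{tr}(u)=0$. *)

From HB Require Import structures.
From mathcomp Require Import all_boot all_order all_algebra.
Set Implicit Arguments. Unset Strict Implicit. Unset Printing Implicit Defensive.
Import GRing.Theory.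
Local Open Scope ring_scope.

(* E = 'rV[K]_n (row vectors); L(E) = 'M[K]_n acting on the right: x |-> x *m u.
   The image of u is its row space. *)

Definition V_good (K : fieldType) (n : nat) (V : {vspace 'M[K]_n}) (x : 'rV[K]_n) : Prop :=
  x != 0 /\ ~ (exists u : 'M[K]_n, [/\ u \in V, (u == x)%MS & \tr u = 0]).

(* Vectors of E are row vectors and an endomorphism u acts by x |-> x *m u,
   so an operator with image K x is exactly a rank-one matrix c *m x, whose
   trace is the scalar x *m c.  Assume, for a contradiction, that no vector
   is V-good: every x != 0 then comes with a column c(x) != 0 such that
   x *m c(x) = 0 and c(x) *m x lies in V.

   1. A counting argument over the 2^n vectors with coordinates in {0,1}
      yields two vectors x, y with p := y *m c(x) != 0 and q := x *m c(y) != 0: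
      for a fixed nonzero column c, flipping one coordinate shows that at
      least half of these vectors are not orthogonal to c, and a relation on
      a finite set that is that dense must contain a pair of mutual edges.
   2. The operator u := c(x) *m x + (p q) *: (c(y) *m y) of V has the two
      eigenvalues p q and - p q (eigenvectors x +/- q y), which are distinct
      and nonzero in characteristic not 2; when n >= 3 it also has the
      eigenvalue 0 since its rank is at most 2.  This contradicts (b),
      resp. (a). *)
From mathcomp Require Import zify.
From mathcomp Require Import all_boot all_order all_algebra.
From Stdlib Require Import Classical.
Set Implicit Arguments. Unset Strict Implicit. Unset Printing Implicit Defensive.
Import GRing.Theory.
Local Open Scope ring_scope.

(* A relation on a finite type in which every vertex other than a sink z has
   out-degree at least half the size of the type must contain two mutual
   edges: otherwise the edge count would be at most (M-1)(M-2)/2, while the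
   degree condition forces at least (M-1)M/2 edges. *)
Lemma dense_relation_mutual_edge (T : finType) (z : T) (R : rel T) :
  (1 < #|T|)%N ->
  (forall a, ~~ R a a) ->
  (forall a b, R a b -> (a != z) && (b != z)) ->
  (forall a, a != z -> #|T| <= 2 * #|[set b | R a b]|)%N ->
  exists a b, R a b && R b a.
Proof.
move=> T_gt1 irrR R_z dense.
have [/existsP [a /existsP [b Rab]]|/existsPn noMutual] :=
  boolP [exists a, exists b, R a b && R b a]; first by exists a, b.
pose out a := [set b | R a b]; pose inc a := [set b | R b a].
pose S := (\sum_a #|out a|)%N.
have card_relE (P : pred T) : #|[set b | P b]| = (\sum_b P b)%N.
  by rewrite -sum1_card big_mkcond; apply: eq_bigr => b _; rewrite inE; case: (P b).
have sum_inc : (\sum_a #|inc a|)%N = S.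
  by rewrite /S; under eq_bigr do rewrite card_relE; rewrite exchange_big;
     apply: eq_bigr => a _; rewrite card_relE.
have sum_nonsink (X : nat) : (\sum_a (a != z) * X = #|T|.-1 * X)%N.
  rewrite -big_distrl /= -(cardC1 z) -sum1_card; congr (_ * _)%N.
  by rewrite [RHS]big_mkcond; apply: eq_bigr => a _; rewrite inE; case: (a != z).
have lower : (#|T|.-1 * #|T| <= 2 * S)%N.
  rewrite -sum_nonsink /S big_distrr /=; apply: leq_sum => a _.
  by case: (eqVneq a z) => [|/dense] //=; rewrite mul1n.
have upper : (2 * S <= #|T|.-1 * (#|T| - 2))%N.
  rewrite mul2n -addnn {2}/S -sum_inc -big_split -sum_nonsink /=.
  apply: leq_sum => a _; case: (eqVneq a z) => [->|az] /=.
    have [out_z inc_z] : out z = set0 /\ inc z = set0.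
      by split; apply/setP => b; rewrite !inE; apply/negbTE/negP => /R_z;
         rewrite eqxx ?andbF.
    by rewrite out_z inc_z cards0.
  have disj : out a :&: inc a = set0.
    by apply/setP => b; rewrite !inE; move/existsPn/(_ b)/negbTE: (noMutual a).
  rewrite mul1n addnC -cardsUI disj cards0 addn0.
  have sub : out a :|: inc a \subset ~: [set a; z].
    apply/subsetP => b; rewrite !inE negb_or; case/orP => [Rab|Rba].
      by rewrite (andP (R_z _ _ Rab)).2 andbT; apply: contraTneq Rab => ->.
    by rewrite (andP (R_z _ _ Rba)).1 andbT; apply: contraTneq Rba => ->.
  apply: leq_trans (subset_leq_card sub) _.
  by rewrite -(cardsC [set a; z]) cards2 az addKn.
have := leq_trans lower upper; rewrite leq_pmul2l; last by lia.
by lia.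
Qed.

Section RankOne.
Variables (K : fieldType) (n : nat).

Definition pairing (x : 'rV[K]_n) (c : 'cV[K]_n) : K := (x *m c) ord0 ord0.

Lemma pairingDl (x y : 'rV[K]_n) c : pairing (x + y) c = pairing x c + pairing y c.
Proof. by rewrite /pairing mulmxDl mxE. Qed.

Lemma pairingZl a (x : 'rV[K]_n) c : pairing (a *: x) c = a * pairing x c.
Proof. by rewrite /pairing -scalemxAl mxE. Qed.

Lemma pairing0l (c : 'cV[K]_n) : pairing 0 c = 0.
Proof. by rewrite /pairing mul0mx mxE. Qed.

Lemma pairing_delta k (c : 'cV[K]_n) : pairing (delta_mx 0 k) c = c k 0.
Proof. by rewrite /pairing -rowE mxE. Qed.

Lemma mulmx_rank1 (y x : 'rV[K]_n) (c : 'cV[K]_n) :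
  y *m (c *m x) = pairing y c *: x.
Proof. by rewrite mulmxA [y *m c]mx11_scalar mul_scalar_mx. Qed.

Lemma trace_rank1 (x : 'rV[K]_n) (c : 'cV[K]_n) : \tr (c *m x) = pairing x c.
Proof. by rewrite mxtrace_mulC trace_mx11. Qed.

Lemma eigenvalue0_rank (g : 'M[K]_n) : (\rank g < n)%N -> eigenvalue g 0.
Proof.
move=> rk_g; rewrite /eigenvalue /eigenspace raddf0 subr0 -mxrank_eq0 mxrank_ker.
by rewrite subn_eq0 -ltnNge.
Qed.

Lemma rank2_eigenvalue0 (a b : 'cV[K]_n) (x y : 'rV[K]_n) :
  (3 <= n)%N -> eigenvalue (a *m x + b *m y) 0.
Proof.
move=> n_ge3; apply: eigenvalue0_rank; apply: leq_trans _ n_ge3.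
apply: leq_ltn_trans (mxrank_add _ _) _.
have rank1 (c : 'cV[K]_n) (v : 'rV[K]_n) : (\rank (c *m v) <= 1)%N.
  exact: leq_trans (mxrankM_maxr _ _) (rank_leq_row _).
exact: leq_add (rank1 _ _) (rank1 _ _).
Qed.

End RankOne.

Section BitVectors.
Variables (K : fieldType) (n : nat).

Definition bit_vec (a : {ffun 'I_n -> bool}) : 'rV[K]_n := \row_i (a i)%:R.

Definition flip (k : 'I_n) (a : {ffun 'I_n -> bool}) : {ffun 'I_n -> bool} :=
  [ffun i => if i == k then ~~ a i else a i].

Lemma flipK k : involutive (flip k).
Proof. by move=> a; apply/ffunP => i; rewrite !ffunE; case: eqP => // _; rewrite negbK. Qed.

Lemma bit_vec_flip k a :
  bit_vec (flip k a) = bit_vec a + (if a k then -1 else 1) *: delta_mx 0 k.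
Proof.
apply/rowP => i; rewrite !mxE ffunE; case: (eqVneq i k) => [->|ne].
  by rewrite eqxx; case: (a k); rewrite /= ?mulr1 ?subrr ?add0r.
by rewrite andbF mulr0 addr0.
Qed.

Lemma bit_vec_eq0 a : (bit_vec a == 0) = (a == [ffun _ => false]).
Proof.
apply/eqP/eqP => [a0|->]; last by apply/rowP => i; rewrite !mxE ffunE.
apply/ffunP => i; move/rowP: a0 => /(_ i); rewrite !mxE ffunE.
by case: (a i) => // /eqP; rewrite oner_eq0.
Qed.

(* A nonzero linear form vanishes on at most half of the {0,1}-vectors:
   if c_k != 0, flipping the k-th coordinate moves every zero of c to a
   non-zero. *)
Lemma half_bit_vecs_nonvanishing (c : 'cV[K]_n) : c != 0 ->
  (#|{ffun 'I_n -> bool}| <= 2 * #|[set b | pairing (bit_vec b) c != 0%R]|)%N.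
Proof.
move=> c0; set A := [set b | _].
have [k ck0] : exists k, c k 0 != 0.
  apply/existsP; apply: contraR c0 => /existsPn c_eq0; apply/eqP/matrixP => i j.
  by rewrite (ord1 j) mxE; apply/eqP; rewrite -[_ == _]negbK c_eq0.
have cover : [set: {ffun 'I_n -> bool}] \subset A :|: flip k @^-1: A.
  apply/subsetP => b _; rewrite !inE; apply/orP.
  have [cb0|] := eqVneq (pairing (bit_vec b) c) 0; [right | by left].
  rewrite bit_vec_flip pairingDl pairingZl cb0 add0r pairing_delta.
  by case: (b k); rewrite ?mulN1r ?oppr_eq0 ?mul1r.
rewrite -cardsT; apply: leq_trans (subset_leq_card cover) _.
rewrite mul2n -addnn (leq_trans (leq_card_setU _ _)) // card_preimset //.
exact: inv_inj (flipK k).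
Qed.

Lemma mutually_nonorthogonal_pair (c : 'rV[K]_n -> 'cV[K]_n) : (0 < n)%N ->
  (forall x, x != 0 -> c x != 0 /\ pairing x (c x) = 0) ->
  exists x y, pairing y (c x) != 0 /\ pairing x (c y) != 0.
Proof.
move=> n_gt0 c_orth; pose z : {ffun 'I_n -> bool} := [ffun => false].
have vec_z : bit_vec z = 0 :> 'rV[K]_n by apply/eqP; rewrite bit_vec_eq0.
pose R a b := (a != z) && (pairing (bit_vec b) (c (bit_vec a)) != 0).
have card_gt1 : (1 < #|{ffun 'I_n -> bool}|)%N.
  rewrite card_ffun card_bool card_ord.
  by case: n n_gt0 => // m _; rewrite expnS leq_pmulr // expn_gt0.
have irrR a : ~~ R a a.
  rewrite /R negb_and negbK; have [//|az] := eqVneq a z.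
  by rewrite (c_orth (bit_vec a) _).2 ?eqxx // bit_vec_eq0.
have R_z a b : R a b -> (a != z) && (b != z).
  move=> /andP [-> Rab]; apply: contra Rab => /eqP ->.
  by rewrite vec_z pairing0l.
have dense a : a != z -> (#|{ffun 'I_n -> bool}| <= 2 * #|[set b | R a b]|)%N.
  move=> az; apply: leq_trans (half_bit_vecs_nonvanishing _) _.
    by apply: (c_orth (bit_vec a) _).1; rewrite bit_vec_eq0.
  by rewrite leq_pmul2l //; apply/subset_leq_card/subsetP => b; rewrite !inE /R az.
have [a [b /andP [/andP [_ Rab] /andP [_ Rba]]]] :=
  dense_relation_mutual_edge card_gt1 irrR R_z dense.
by exists (bit_vec a), (bit_vec b).
Qed.

End BitVectors.

Section Pencil.
Variables (K : fieldType) (n : nat) (x y : 'rV[K]_n) (cx cy : 'cV[K]_n).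
Hypotheses (x_cx : pairing x cx = 0) (y_cy : pairing y cy = 0).

(* With p = y *m cx and q = x *m cy, the operator
   cx *m x + (p q) *: (cy *m y) has eigenvector x + s q y for the eigenvalue
   s p q, whenever s ^+ 2 = 1. *)
Lemma pencil_eigenvalue (s : K) : s ^+ 2 = 1 ->
  pairing y cx != 0 -> pairing x cy != 0 ->
  eigenvalue (cx *m x + (pairing y cx * pairing x cy) *: (cy *m y))
             (s * (pairing y cx * pairing x cy)).
Proof.
move=> s2 p0 q0; set p := pairing y cx in p0 *; set q := pairing x cy in q0 *.
have ss : s * s = 1 by rewrite -expr2.
have s0 : s != 0 by apply: contra_eq_neq ss => ->; rewrite mul0r eq_sym oner_neq0.
apply/eigenvalueP; exists (x + (s * q) *: y).
  rewrite mulmxDr -scalemxAr !mulmx_rank1 !pairingDl !pairingZl x_cx y_cy -/p -/q.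
  rewrite mulr0 addr0 add0r scalerDr !scalerA.
  congr (_ *: _ + _ *: _); first by rewrite -mulrA (mulrC q).
  by rewrite [RHS]mulrACA ss mul1r.
apply: contra_neq (mulf_neq0 (mulf_neq0 s0 q0) p0) => v0.
by rewrite -[_ * p]add0r -x_cx -pairingZl -pairingDl v0 pairing0l.
Qed.

End Pencil.

(* If no vector is V-good, every nonzero x carries a nonzero column c(x)
   with c(x) *m x in V and x *m c(x) = 0 (the operator c(x) *m x has image
   K x and trace zero). *)
Lemma no_good_vector_witness (K : fieldType) (n : nat) (V : {vspace 'M[K]_n}) :
  ~ (exists x, V_good V x) ->
  exists c : 'rV[K]_n -> 'cV[K]_n, forall x, x != 0 ->
    [/\ c x != 0, pairing x (c x) = 0 & c x *m x \in V].
Proof.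
move=> no_good.
have witness x : exists c : 'cV[K]_n,
    (x != 0) ==> [&& c != 0, pairing x c == 0 & c *m x \in V].
  have [->|x0] := eqVneq x 0; first by exists 0.
  have [u [uV /andP [imx ximu] tr0]] :
      exists u : 'M[K]_n, [/\ u \in V, (u == x)%MS & \tr u = 0].
    by apply: NNPP => no_u; apply: no_good; exists x.
  have [c uE] := submxP imx; exists c; rewrite /= -uE uV andbT.
  apply/andP; split; last by rewrite -trace_rank1 -uE tr0.
  by apply: contra_neq x0 => c0; move: ximu; rewrite uE c0 mul0mx submx0 => /eqP.
exists (fun x => xchoose (witness x)) => x x0.
by have /implyP/(_ x0)/and3P [-> /eqP -> ->] := xchooseP (witness x).
Qed.

Lemma neq_opp (K : fieldType) (t : K) : (2 \notin [pchar K])%N -> t != 0 -> t != - t.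
Proof.
move=> char2 t0; have two0 : 2%:R != 0 :> K by move: char2; rewrite inE.
by rewrite -subr_eq0 opprK -mulr2n -mulr_natr mulf_neq0.
Qed.

Theorem mainTheorem8 (K : fieldType) (n : nat) (V : {vspace 'M[K]_n}) :
  (2 \notin [pchar K])%N ->
  ((3 <= n)%N /\
     (forall u : 'M[K]_n, u \in V -> forall a b c : K,
        eigenvalue u a -> eigenvalue u b -> eigenvalue u c ->
        [\/ a = b, a = c | b = c])
   \/
   (2 <= n)%N /\
     (forall u : 'M[K]_n, u \in V -> forall a b : K,
        a != 0 -> b != 0 -> eigenvalue u a -> eigenvalue u b -> a = b)) ->
  exists x : 'rV[K]_n, V_good V x.
Proof.
move=> char2 hyp; apply: NNPP => /no_good_vector_witness [c c_bad].
have n_gt0 : (0 < n)%N by case: hyp => [[]|[]]; lia.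
have [|x [y [p0 q0]]] := mutually_nonorthogonal_pair n_gt0 (c := c).
  by move=> x /c_bad [].
have x0 : x != 0 by apply: contra_neq q0 => ->; rewrite pairing0l.
have y0 : y != 0 by apply: contra_neq p0 => ->; rewrite pairing0l.
have [_ x_cx cxV] := c_bad x x0; have [_ y_cy cyV] := c_bad y y0.
set pq := pairing y (c x) * pairing x (c y).
set u := c x *m x + pq *: (c y *m y).
have uV : u \in V by rewrite memvD ?memvZ.
have pq0 : pq != 0 by rewrite mulf_neq0.
have eig_plus := pencil_eigenvalue x_cx y_cy (expr1n _ 2) p0 q0.
have eig_minus := pencil_eigenvalue x_cx y_cy (etrans (sqrrN _) (expr1n _ 2)) p0 q0.
rewrite mul1r -/pq -/u in eig_plus; rewrite mulN1r -/pq -/u in eig_minus.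
have pq_neq := neq_opp char2 pq0.
have neg_pq0 : - pq != 0 by rewrite oppr_eq0.
case: hyp => [[n_ge3 three_eig]|[_ one_nonzero_eig]].
  have eig0 := rank2_eigenvalue0 (c x) (pq *: c y) x y n_ge3.
  rewrite -scalemxAl -/u in eig0.
  by case: (three_eig u uV _ _ _ eig_plus eig_minus eig0) => /eqP;
     rewrite ?(negbTE pq_neq) ?(negbTE pq0) ?(negbTE neg_pq0).
by move/eqP: pq_neq; apply; exact: one_nonzero_eig uV _ _ pq0 neg_pq0 eig_plus eig_minus.
Qed.
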